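(* Let $\Bbbk$ be algebraically closed, $S:\mathbb G_m\to GL(V)$ a linear action on a finite-dimensional $\Bbbk$-vector space $V$, and $X\subseteq\mathbb PV$ a closed $S$-invariant subscheme. Let $b\in V^*$, regarded as an element of $\Gamma(X;\mathcal O(1))$, be an $S$-weight vector of weight $k\in\mathbb Z$, and let $f\in X^S$, with $\Phi_S(f)\in\mathbb Z$ the weight of $S$ on $\mathcal O(1)|_f$. Then: (i) if $k>\Phi_S(f)$, then $b$ vanishes at $f$; (ii) if $k<\Phi_S(f)$, then $b$ vanishes on all of $\overline{X_f}$; (iii) if $k=\Phi_S(f)$, then the restriction of $b$ to $\overline{X_f}$ is unique up to scale (any two $S$-weight vectors of weight $\Phi_S(f)$ have proportional restrictions to $\overline{X_f}$); (iv) if $b$ does not vanish at $f$ (so $k=\Phi_S(f)$), then $b$ does not vanish at any point of $X_f$.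
   Context: $X_f=\{x\in X:\lim_{z\to0}S(z)\cdot x=f\}$ is the Białynicki-Birula stratum of $f$, and $\overline{X_f}$ its Zariski closure. *)

From HB Require Import structures.
From mathcomp Require Import all_boot all_order all_algebra.
From mathcomp Require Import mpoly.
Set Implicit Arguments. Unset Strict Implicit. Unset Printing Implicit Defensive.
Import Order.TTheory GRing.Theory Num.Theory.
Local Open Scope ring_scope.

(* V = k^n, vectors are row vectors 'rV[k]_n; a point of PV is
   represented by a nonzero vector (all predicates below are scale-invariant).
   The group G_m acts through  v |-> v *m S z  (z : k, z != 0).              *)

Section Defs.
Variables (k : fieldType) (n : nat).

(* A morphism of algebraic groups S : G_m -> GL(V): the matrix entries are
   Laurent polynomials in z, S 1 = 1, and S is multiplicative on k^x. *)
Definition gm_action (S : k -> 'M[k]_n) : Prop :=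
  [/\ exists (N : nat) (P : 'M[{poly k}]_n),
        forall z, z != 0 -> S z = z ^- N *: map_mx (fun p => p.[z]) P,
      S 1 = 1
    & forall z w, z != 0 -> w != 0 -> S (z * w) = S z *m S w].

Definition vfun (v : 'rV[k]_n) : 'I_n -> k := fun i => v 0 i.

(* Zariski closed subsets of PV (as cones of nonzero vectors): common zero
   loci of families of homogeneous polynomials. *)
Definition proj_closed (Z : 'rV[k]_n -> Prop) : Prop :=
  exists P : {mpoly k[n]} -> Prop,
    (forall p, P p -> exists d, p \is d.-homog) /\
    (forall v, Z v <-> (v != 0 /\ forall p, P p -> p.@[vfun v] = 0)).

Definition zclosure (A : 'rV[k]_n -> Prop) : 'rV[k]_n -> Prop :=
  fun v => v != 0 /\ forall Z, proj_closed Z -> (forall w, A w -> Z w) -> Z v.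

Definition S_invariant (S : k -> 'M[k]_n) (X : 'rV[k]_n -> Prop) : Prop :=
  forall z v, z != 0 -> X v -> X (v *m S z).

Definition S_fixed (S : k -> 'M[k]_n) (f : 'rV[k]_n) : Prop :=
  f != 0 /\ forall z, z != 0 -> exists c : k, f *m S z = c *: f.

Definition proj_eq (x y : 'rV[k]_n) : Prop :=
  x != 0 /\ y != 0 /\ exists c : k, c != 0 /\ x = c *: y.

(* lim_{z -> 0} S(z).x = f in PV: the orbit map z |-> [x S(z)] extends over
   z = 0 (i.e. x S(z) = z^m q(z) with q a polynomial vector, q(0) != 0)
   and its value at 0 is f. *)
Definition bb_lim (S : k -> 'M[k]_n) (x f : 'rV[k]_n) : Prop :=
  exists (m : int) (q : 'rV[{poly k}]_n),
    proj_eq (map_mx (fun p => p.[0]) q) f /\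
    forall z, z != 0 -> x *m S z = (z ^ m) *: map_mx (fun p => p.[z]) q.

Definition bb_stratum (S : k -> 'M[k]_n) (X : 'rV[k]_n -> Prop) (f : 'rV[k]_n)
  : 'rV[k]_n -> Prop := fun x => X x /\ x != 0 /\ bb_lim S x f.

Definition lform (b : 'cV[k]_n) (v : 'rV[k]_n) : k := (v *m b) 0 0.

Definition weight_vector (S : k -> 'M[k]_n) (b : 'cV[k]_n) (w : int) : Prop :=
  forall z, z != 0 -> S z *m b = (z ^ w) *: b.

(* Phi is the weight of S on O(1)|_f, for f fixed, with the convention
   matching weight_vector: a linear form on the line f has weight Phi iff
   f S(z) = z^Phi f. *)
Definition weight_at (S : k -> 'M[k]_n) (f : 'rV[k]_n) (Phi : int) : Prop :=
  forall z, z != 0 -> f *m S z = (z ^ Phi) *: f.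

End Defs.

From HB Require Import structures.
From mathcomp Require Import all_boot all_order all_algebra.
From mathcomp Require Import mpoly.
Set Implicit Arguments.
Unset Strict Implicit.
Unset Printing Implicit Defensive.

Import Order.TTheory GRing.Theory Num.Theory.
Local Open Scope ring_scope.

(* For x in the stratum X_f, x S(z) = z^m q(z) with q a polynomial row vector and
   q(0) a nonzero multiple c f of f; since q(0) is then a weight vector of weight m,
   m is the weight Phi of f.  For a form b of weight w this gives
   z^w b(x) = z^Phi g(z) with g = b(q) a polynomial and g(0) = c b(f).  If w < Phi,
   then b(x) = z^(Phi - w) g(z) vanishes (put z = 0); if w = Phi, then
   b(x) = g(0) = c b(f) with c independent of b, which gives (iii) and (iv); (i) is
   the comparison of weights at f.  The zero locus of a linear form is closed, so
   vanishing on X_f passes to its closure. *)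

Local Notation evrow q z := (map_mx (fun p => p.[z]) q).

Lemma poly_eq_on_units (k : closedFieldType) (p q : {poly k}) :
  (forall z, z != 0 -> p.[z] = q.[z]) -> p = q.
Proof.
move=> epq; apply/eqP; rewrite -subr_eq0; apply: contraT => pq0.
(* A root of the nonconstant (p - q) 'X + 1 is a unit at which p - q does not vanish. *)
have: size ((p - q) * 'X + 1) != 1%N.
  rewrite size_polyDl size_mulX // ?eqSS ?size_poly_eq0 //.
  by rewrite size_poly1 ltnS lt0n size_poly_eq0.
case/closed_rootP => z; rewrite /root !hornerE.
have [->|z0] := eqVneq z 0; first by rewrite mulr0 add0r oner_eq0.
by rewrite epq // subrr mul0r add0r oner_eq0.
Qed.

Lemma expr_units_eq1 (k : closedFieldType) (e : nat) :
  (forall y : k, y != 0 -> y ^+ e = 1) -> e = 0%N.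
Proof.
move=> he; have : 'X^e = 1 :> {poly k}.
  by apply: poly_eq_on_units => z z0; rewrite hornerXn hornerC he.
by move/(congr1 (fun p : {poly k} => size p)); rewrite size_polyXn size_poly1 => -[].
Qed.

Lemma eq_expfz_on_units (k : closedFieldType) (a b : int) :
  (forall y : k, y != 0 -> y ^ a = y ^ b) -> a = b.
Proof.
move=> hab; apply/eqP; rewrite -subr_eq0; apply/eqP.
have hab1 (y : k) : y != 0 -> y ^ (a - b) = 1.
  move=> y0; rewrite expfzDr // hab // -invr_expz divff //; exact: expfz_neq0.
case: (a - b) hab1 => e he; first by rewrite (@expr_units_eq1 k e).
suff : e.+1 = 0%N by [].
apply: (@expr_units_eq1 k) => y y0; apply/eqP; rewrite -invr_eq1; apply/eqP.
by rewrite -(he y y0) NegzE -invr_expz exprnP.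
Qed.

Section WeightVectors.
Variables (k : fieldType) (n : nat).
Implicit Types (b : 'cV[k]_n) (v : 'rV[k]_n).

Lemma lformZ b a v : lform b (a *: v) = a * lform b v.
Proof. by rewrite /lform -scalemxAl mxE. Qed.

Lemma lform_combine b b' lam mu v :
  lform (lam *: b + mu *: b') v = lam * lform b v + mu * lform b' v.
Proof. by rewrite /lform mulmxDr -!scalemxAr !mxE. Qed.

Lemma lform_evrow b (q : 'rV[{poly k}]_n) z :
  lform b (evrow q z) = (\sum_i q 0 i * (b i 0)%:P).[z].
Proof.
rewrite /lform mxE horner_sum; apply: eq_bigr => i _.
by rewrite mxE hornerM hornerC.
Qed.

Lemma lform_weight (S : k -> 'M[k]_n) b w :
  weight_vector S b w -> forall v z, z != 0 -> lform b (v *m S z) = z ^ w * lform b v.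
Proof. by move=> hb v z z0; rewrite /lform -mulmxA hb // -scalemxAr mxE. Qed.

Lemma weight_vector_combine (S : k -> 'M[k]_n) b b' lam mu w :
  weight_vector S b w -> weight_vector S b' w ->
  weight_vector S (lam *: b + mu *: b') w.
Proof.
move=> hb hb' z z0; rewrite mulmxDr -!scalemxAr hb // hb' //.
by rewrite scalerDr !scalerA mulrC [_ * mu]mulrC.
Qed.

Lemma weight_atZ (S : k -> 'M[k]_n) v c a :
  weight_at S v a -> weight_at S (c *: v) a.
Proof. by move=> hv z z0; rewrite -scalemxAl hv // !scalerA mulrC. Qed.

Lemma proj_closed_lform_eq0 b : proj_closed (fun v => v != 0 /\ lform b v = 0).
Proof.
exists (eq^~ (\sum_(i < n) b i 0 *: 'X_i)); split.
  move=> p ->; exists 1%N; apply: rpred_sum => i _; apply: rpredZ.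
  by rewrite dhomogX; apply/eqP; apply: mdeg1.
have lformE v : lform b v = (\sum_(i < n) b i 0 *: 'X_i).@[vfun v].
  rewrite /lform mxE raddf_sum /=.
  by apply: eq_bigr => i _; rewrite mevalZ mevalXU /vfun mulrC.
move=> v; split=> [[v0 bv]|[v0 hv]]; split=> //; last by rewrite lformE hv.
by move=> p ->; rewrite -lformE.
Qed.

Lemma zclosure_lform_eq0 (A : 'rV[k]_n -> Prop) b :
  (forall x, A x -> x != 0 /\ lform b x = 0) ->
  forall x, zclosure A x -> lform b x = 0.
Proof. by move=> hA x [_ hx]; have [] := hx _ (proj_closed_lform_eq0 b) hA. Qed.

End WeightVectors.

Section StratumWeights.
Variables (k : closedFieldType) (n : nat) (S : k -> 'M[k]_n).
Hypothesis S_mul : forall z w, z != 0 -> w != 0 -> S (z * w) = S z *m S w.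

Lemma bb_limit_weight (x : 'rV[k]_n) (m : int) (q : 'rV[{poly k}]_n) :
  (forall z, z != 0 -> x *m S z = z ^ m *: evrow q z) -> weight_at S (evrow q 0) m.
Proof.
move=> hx y y0; apply/matrixP => i j; rewrite ord1 {i} !mxE.
have : y ^ m *: (q 0 j \Po (y *: 'X)) = \sum_i q 0 i * (S y i j)%:P.
  apply: poly_eq_on_units => z z0.
  have := hx _ (mulf_neq0 z0 y0); rewrite S_mul // mulmxA hx // -scalemxAl expfzMl.
  move/matrixP/(_ 0 j); rewrite !mxE => ezy.
  rewrite hornerZ horner_comp hornerZ hornerX horner_sum.
  apply: (mulfI (expfz_neq0 m z0)); rewrite [y * z]mulrC mulrA -ezy.
  by congr (_ * _); apply: eq_bigr => i _; rewrite !mxE hornerM hornerC.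
move=> /(congr1 (fun p => p.[0])).
rewrite hornerZ horner_comp hornerZ hornerX mulr0 horner_sum => ->.
by apply: eq_bigr => i _; rewrite mxE hornerM hornerC.
Qed.

Lemma weight_at_uniq (f : 'rV[k]_n) (a b : int) :
  f != 0 -> weight_at S f a -> weight_at S f b -> a = b.
Proof.
move=> /rV0Pn [j fj] ha hb; apply: eq_expfz_on_units => y y0; apply/esym.
by apply: (mulIf fj); move: (ha y y0); rewrite hb // => /matrixP/(_ 0 j); rewrite !mxE.
Qed.

Lemma lform_weight_at (f : 'rV[k]_n) (b : 'cV[k]_n) (w Phi : int) :
  weight_vector S b w -> weight_at S f Phi -> lform b f != 0 -> w = Phi.
Proof.
move=> hb wf bf; apply: eq_expfz_on_units => y y0; apply: (mulIf bf).
by rewrite -(lform_weight hb f y0) wf // lformZ.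
Qed.

Lemma bb_lim_weight_at (f x : 'rV[k]_n) (Phi : int) :
  weight_at S f Phi -> bb_lim S x f ->
  exists c (q : 'rV[{poly k}]_n), [/\ c != 0, evrow q 0 = c *: f
    & forall z, z != 0 -> x *m S z = z ^ Phi *: evrow q z].
Proof.
move=> wf [m [q [[q00 [_ [c [c0 q0E]]]] hx]]].
have <- : m = Phi.
  by apply: (weight_at_uniq q00 (bb_limit_weight hx)); rewrite q0E; exact: weight_atZ.
by exists c, q.
Qed.

Lemma lform_bb_lim_lt (f x : 'rV[k]_n) (Phi : int) (b : 'cV[k]_n) (w : int) :
  weight_at S f Phi -> bb_lim S x f -> weight_vector S b w -> w < Phi ->
  lform b x = 0.
Proof.
move=> wf lim hb lt_wPhi; have [_ [q [_ _ hx]]] := bb_lim_weight_at wf lim.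
have [e e0 de] : exists2 e : nat, (0 < e)%N & Phi - w = e.
  by exists `|Phi - w|%N; rewrite ?absz_gt0 ?gtz0_abs ?subr_gt0 // subr_eq0 gt_eqF.
have : (lform b x)%:P = 'X^e * \sum_i q 0 i * (b i 0)%:P.
  apply: poly_eq_on_units => z z0; rewrite hornerC hornerM hornerXn -lform_evrow.
  apply: (mulfI (expfz_neq0 w z0)); rewrite -(lform_weight hb x z0) hx // lformZ.
  by rewrite exprnP -de mulrA -expfzDr // addrC subrK.
move=> /(congr1 (fun p => p.[0])).
by rewrite hornerC hornerM hornerXn expr0n eqn0Ngt e0 mul0r.
Qed.

Lemma lform_bb_lim_eq (f x : 'rV[k]_n) (Phi : int) :
  weight_at S f Phi -> bb_lim S x f ->
  exists2 c, c != 0 & forall b, weight_vector S b Phi -> lform b x = c * lform b f.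
Proof.
move=> wf lim; have [c [q [c0 q0E hx]]] := bb_lim_weight_at wf lim.
exists c => // b hb.
have : (lform b x)%:P = \sum_i q 0 i * (b i 0)%:P.
  apply: poly_eq_on_units => z z0; rewrite hornerC -lform_evrow.
  by apply: (mulfI (expfz_neq0 Phi z0)); rewrite -(lform_weight hb x z0) hx // lformZ.
by move=> /(congr1 (fun p => p.[0])); rewrite hornerC -lform_evrow q0E lformZ.
Qed.

End StratumWeights.

Theorem lemma2p1 (k : closedFieldType) (n : nat) (S : k -> 'M[k]_n)
  (X : 'rV[k]_n -> Prop) (b : 'cV[k]_n) (w : int) (f : 'rV[k]_n) (Phi : int) :
  gm_action S -> proj_closed X -> S_invariant S X ->
  weight_vector S b w ->
  X f -> S_fixed S f -> weight_at S f Phi ->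
  [/\ (Phi < w)%R -> lform b f = 0,
      (w < Phi)%R -> (forall x, zclosure (bb_stratum S X f) x -> lform b x = 0),
      (w = Phi ->
        forall b' : 'cV[k]_n, weight_vector S b' Phi ->
        exists lam mu : k, (lam != 0 \/ mu != 0) /\
          forall x, zclosure (bb_stratum S X f) x ->
            lam * lform b x + mu * lform b' x = 0)
    & lform b f != 0 -> forall x, bb_stratum S X f x -> lform b x != 0].
Proof.
move=> [_ _ S_mul] _ _ hb _ _ wf.
have vanish_on_closure b'' : weight_vector S b'' Phi -> lform b'' f = 0 ->
    forall x, zclosure (bb_stratum S X f) x -> lform b'' x = 0.
  move=> hb'' bf; apply: zclosure_lform_eq0 => x [_ [x0 lim]]; split=> //.
  have [c _ hc] := lform_bb_lim_eq S_mul wf lim.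
  by rewrite hc // bf mulr0.
split.
- move=> lt_Phiw; apply/eqP; move: lt_Phiw; apply: contraTT => bf.
  by rewrite (lform_weight_at hb wf bf) ltxx.
- move=> lt_wPhi; apply: zclosure_lform_eq0 => x [_ [x0 lim]]; split=> //.
  exact: lform_bb_lim_lt lim hb lt_wPhi.
- move=> eP b' hb'; subst w.
  have [bf|bf] := eqVneq (lform b f) 0.
    exists 1, 0; split=> [|x hx]; first by left; rewrite oner_eq0.
    by rewrite mul0r addr0 mul1r (vanish_on_closure b hb bf x hx).
  exists (lform b' f), (- lform b f); split=> [|x hx]; first by right; rewrite oppr_eq0.
  rewrite -lform_combine; apply: (vanish_on_closure _ _ _ x hx).
    exact: weight_vector_combine.
  by rewrite lform_combine mulNr mulrC addrN.
- move=> bf x [_ [_ lim]]; have eP := lform_weight_at hb wf bf; subst w.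
  have [c c0 hc] := lform_bb_lim_eq S_mul wf lim.
  by rewrite hc // mulf_neq0.
Qed.
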